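(* Let $(\Omega,\mathcal{F})$ be a measurable space, $T:\Omega\to\Omega$ a measurable transformation and $V$ a $T$-invariant upper probability on $(\Omega,\mathcal{F})$. Then $V$ is ergodic if and only if there exists a probability $Q\in\mathcal{M}^e(T)\cap\operatorname{core}(V)$ such that for every $P\in\operatorname{core}(V)$, $P(A)=Q(A)$ for all $A\in\mathcal{I}$. Moreover, such a $Q$ is unique.
   Context: A capacity on $(\Omega,\mathcal{F})$ is a map $\mu:\mathcal{F}\to[0,1]$ with $\mu(\emptyset)=0$, $\mu(\Omega)=1$ and monotone. An upper probability is a capacity $V$ for which there is a weak*-compact set $\Lambda$ of probabilities (weak* = setwise convergence on $\mathcal{F}$) with $V(A)=\max_{P\in\Lambda}P(A)$ for all $A\in\mathcal{F}$. $V$ is $T$-invariant if $V(T^{-1}A)=V(A)$ for all $A$. $\mathcal{I}=\{A\in\mathcal{F}:T^{-1}A=A\}$. A $T$-invariant capacity $\mu$ is ergodic if for every $B\in\mathcal{I}$: $\mu(B)\in\{0,1\}$, and $\mu(B)=0$ or $\mu(\Omega\setminus B)=0$. $\operatorname{core}(\mu)$ is the set of finitely additive set functions $P:\mathcal{F}\to[0,1]$ with $P(\Omega)=1$ and $P(A)\le\mu(A)$ for all $A\in\mathcal{F}$ (for an upper probability these are all $\sigma$-additive). $\mathcal{M}^e(T)$ is the set of $T$-invariant probabilities $P$ on $(\Omega,\mathcal{F})$ that are ergodic, i.e. $P(A)\in\{0,1\}$ for all $A\in\mathcal{I}$. *)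

From HB Require Import structures.
From mathcomp Require Import all_boot all_order all_algebra.
From mathcomp Require Import all_classical all_reals all_analysis.
Set Implicit Arguments. Unset Strict Implicit. Unset Printing Implicit Defensive.
Import Order.TTheory GRing.Theory Num.Theory.
Import numFieldNormedType.Exports.
Local Open Scope classical_set_scope.
Local Open Scope ring_scope.

Section Defs.
Context (d : measure_display) (Omega : measurableType d) (R : realType).

Definition capacity (mu : set Omega -> R) : Prop :=
  [/\ mu set0 = 0, mu setT = 1,
      (forall A, measurable A -> 0 <= mu A <= 1) &
      (forall A B, measurable A -> measurable B -> A `<=` B -> mu A <= mu B)].

Definition fa_prob (P : set Omega -> R) : Prop :=
  [/\ P setT = 1,
      (forall A, measurable A -> 0 <= P A <= 1) &
      (forall A B, measurable A -> measurable B -> A `&` B = set0 ->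
         P (A `|` B) = P A + P B)].

Definition is_probability (P : set Omega -> R) : Prop :=
  fa_prob P /\
  (forall F : nat -> set Omega, (forall n, measurable (F n)) ->
     trivIset setT F ->
     (fun n : nat => \sum_(i < n) P (F i) : R) @ \oo --> (P (\bigcup_n F n) : R)).

(* weak* topology = setwise convergence on F: a set of set functions is
   weak*-compact iff its image under restriction to F is compact in the
   product (pointwise) topology on (set Omega -> R). *)
Definition weak_star_compact (L : set (set Omega -> R)) : Prop :=
  compact ((fun P : set Omega -> R => (P \_ measurable : {ptws set Omega -> R})) @` L).

Definition upper_probability (V : set Omega -> R) : Prop :=
  capacity V /\
  exists L : set (set Omega -> R),
    [/\ (forall P, L P -> is_probability P), weak_star_compact L &
        (forall A, measurable A ->
           (exists2 P, L P & P A = V A) /\ (forall P, L P -> P A <= V A))].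

Definition T_invariant (T : Omega -> Omega) (mu : set Omega -> R) : Prop :=
  forall A, measurable A -> mu (T @^-1` A) = mu A.

Definition invariant_set (T : Omega -> Omega) (A : set Omega) : Prop :=
  measurable A /\ T @^-1` A = A.

Definition ergodic_capacity (T : Omega -> Omega) (mu : set Omega -> R) : Prop :=
  T_invariant T mu /\
  forall B, invariant_set T B ->
    (mu B = 0 \/ mu B = 1) /\ (mu B = 0 \/ mu (~` B) = 0).

Definition core (mu : set Omega -> R) : set (set Omega -> R) :=
  [set P | fa_prob P /\ forall A, measurable A -> P A <= mu A].

Definition ergodic_prob (T : Omega -> Omega) : set (set Omega -> R) :=
  [set P | [/\ is_probability P, T_invariant T P &
            forall A, invariant_set T A -> P A = 0 \/ P A = 1]].

End Defs.

From HB Require Import structures.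
From mathcomp Require Import all_boot all_order all_algebra.
From mathcomp Require Import all_classical all_reals all_analysis.
From mathcomp Require Import lra zify.
Import Order.TTheory GRing.Theory Num.Theory.
Import numFieldNormedType.Exports.
Local Open Scope classical_set_scope.
Local Open Scope ring_scope.

(* Since V is the upper envelope of a weak*-compact set of probabilities, V is
   continuous along decreasing sequences with empty intersection, so every
   element of core(V) is sigma-additive.  A weak* cluster point of the Cesaro
   averages (1/n) sum_(k < n) P0 o T^-k of some P0 in core(V) is a T-invariant
   element of core(V) (Krylov-Bogolyubov).  Two T-invariant probabilities that
   agree on the invariant sets agree everywhere: the supremum s of
   nu = Q1 - Q2 over measurable sets is attained on some set P (a Hahn
   positive set), and the T-invariant set of points whose orbit visits P
   infinitely often still has nu-measure s; as nu vanishes on invariant sets,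
   s = 0.
   If V is ergodic, every element of core(V) coincides with V on invariant
   sets, so the invariant element of core(V) is the required Q; conversely, V
   agrees with Q on invariant sets because V is attained in core(V). *)

Section FinitelyAdditive.
Context {d : measure_display} {Omega : measurableType d} {R : realType}.
Context {P : set Omega -> R} (fP : fa_prob P).
Implicit Types A B : set Omega.

Lemma fa_prob_ge0 {A} : measurable A -> 0 <= P A.
Proof. by case: fP => _ b _ mA; have /andP[] := b _ mA. Qed.

Lemma fa_prob_le1 {A} : measurable A -> P A <= 1.
Proof. by case: fP => _ b _ mA; have /andP[] := b _ mA. Qed.

Lemma fa_prob0 : P set0 = 0.
Proof.
case: fP => _ _ add; have := add _ _ measurable0 measurable0 (setI0 set0).
rewrite setU0; lra.
Qed.

Lemma fa_probD {A B} : measurable A -> measurable B -> A `<=` B ->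
  P B = P A + P (B `\` A).
Proof.
case: fP => _ _ add mA mB AB; rewrite -add ?setDUK //; first exact: measurableD.
by rewrite setDE setICA setICr setI0.
Qed.

Lemma le_fa_prob {A B} : measurable A -> measurable B -> A `<=` B -> P A <= P B.
Proof.
move=> mA mB AB; rewrite (fa_probD mA mB AB) lerDl.
exact/fa_prob_ge0/measurableD.
Qed.

Lemma fa_probC {A} : measurable A -> P (~` A) = 1 - P A.
Proof.
case: fP => PT _ add mA.
have := add _ _ mA (measurableC mA) (setICr A); rewrite setUCr PT; lra.
Qed.

Lemma fa_probUI {A B} : measurable A -> measurable B ->
  P (A `|` B) + P (A `&` B) = P A + P B.
Proof.
move=> mA mB; have mAB := measurableU _ _ mA mB.
rewrite (fa_probD (measurableI _ _ mA mB) mB (@subIsetr _ A B)).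
rewrite (fa_probD mA mAB (@subsetUl _ A B)) setDUl setDv set0U setDIr setDv setU0.
lra.
Qed.

Lemma fa_prob_bigsetU (F : nat -> set Omega) n :
  (forall i, measurable (F i)) -> trivIset setT F ->
  P (\big[setU/set0]_(i < n) F i) = \sum_(i < n) P (F i).
Proof.
move=> mF tF; elim: n => [|n IH]; first by rewrite !big_ord0 fa_prob0.
rewrite !big_ord_recr /= -IH; case: fP => _ _ ->//.
- exact: bigsetU_measurable.
- rewrite -bigcup_mkord; apply/seteqP; split => // x [[i /= ilt Fix] Fnx].
  by move: ilt; rewrite (tF i n I I) ?ltnn //; exists x.
Qed.

End FinitelyAdditive.

Section SigmaAdditive.
Context {d : measure_display} {Omega : measurableType d} {R : realType}.
Context {P : set Omega -> R} (pP : is_probability P).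

Lemma nondecreasing_cvg_probability (E : nat -> set Omega) :
  (forall n, measurable (E n)) -> {homo E : n m / (n <= m)%N >-> n `<=` m} ->
  P (E n) @[n --> \oo] --> P (\bigcup_n E n).
Proof.
move=> mE ndE; have nd : nondecreasing_seq E by move=> n m /ndE/subsetPset.
have mD n : measurable (seqD E n) by case: n => [|n] /=; [|exact: measurableD].
have := pP.2 _ mD (trivIset_seqD nd); rewrite eq_bigcup_seqD -cvg_shiftS.
suff -> : (fun n => P (E n)) = (fun n => \sum_(i < n.+1) P (seqD E i)) by [].
apply/funext => n; rewrite -fa_prob_bigsetU ?nondecreasing_bigsetU_seqD //.
  exact: pP.1.
exact: trivIset_seqD.
Qed.

Lemma nonincreasing_cvg_probability (E : nat -> set Omega) :
  (forall n, measurable (E n)) -> {homo E : n m / (n <= m)%N >-> m `<=` n} ->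
  P (E n) @[n --> \oo] --> P (\bigcap_n E n).
Proof.
move=> mE niE; have fP := pP.1.
have mI : measurable (\bigcap_n E n) by apply: bigcap_measurable => // ; exists 0%N.
have HC : (1 - P (E n)) @[n --> \oo] --> 1 - P (\bigcap_n E n).
  rewrite -(fa_probC fP mI) setC_bigcap.
  under eq_cvg do rewrite -(fa_probC fP (mE _)).
  apply: nondecreasing_cvg_probability => [n|n m nm]; first exact: measurableC.
  exact/subsetC/niE.
rewrite -[P (\bigcap_n E n)](subKr 1).
under eq_cvg do rewrite -[P (E _)](subKr 1).
exact: (cvgB (cvg_cst (1 : R)) HC).
Qed.

End SigmaAdditive.

Lemma compact_cluster_seq {X : topologicalType} (K : set X) (u : nat -> X) :
  compact K -> (forall n, K (u n)) -> exists2 x, K x & cluster (u @ \oo) x.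
Proof.
move=> cK Ku; have uK : (u @ \oo) K by exists 0%N => // n _; exact: Ku.
by have [x [Kx clx]] := cK _ _ uK; exists x.
Qed.

Lemma cluster_seq_le {X : topologicalType} {R : realType} (u : nat -> X)
    (g h : X -> R) x :
  continuous g -> continuous h -> (\forall n \near \oo, g (u n) <= h (u n)) ->
  cluster (u @ \oo) x -> g x <= h x.
Proof.
move=> cg ch ev; have cC : closed [set y | g y <= h y].
  rewrite (_ : [set y | _] = (h - g) @^-1` [set r | 0 <= r]).
    by apply: preimage_closed (@closed_ge _ 0) => y _; exact: (continuousB (ch y) (cg y)).
  by apply/seteqP; split => y /=; rewrite subr_ge0.
by rewrite clusterE => /(_ [set y | g y <= h y] ev); rewrite -(closure_id _).1.
Qed.

Section Setwise.
Context {d : measure_display} {Omega : measurableType d} {R : realType}.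

Definition setwise (P : set Omega -> R) : {ptws set Omega -> R} := P \_ measurable.

Lemma setwiseE P A : measurable A -> setwise P A = P A.
Proof. by move=> mA; rewrite /setwise patchT // inE. Qed.

End Setwise.

Section SetwiseCluster.
Context {d : measure_display} {Omega : measurableType d} {R : realType}.
Local Notation setfun := {ptws set Omega -> R}.
Context {u : nat -> set Omega -> R}.
Hypothesis fu : forall n, fa_prob (u n).

Lemma exists_setwise_cluster : exists Q, cluster (setwise (u n) @[n --> \oo]) Q.
Proof.
have cube := @tychonoff _ (fun _ : set Omega => R) (fun _ => `[0%R, 1%R]%classic)
  (fun _ => @segment_compact R 0 1).
have u01 n A : `[0%R, 1%R]%classic (setwise (u n) A).
  rewrite /setwise /patch /=; case: ifPn => [/set_mem mA|_]; rewrite in_itv /=.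
    by have [_ b _] := fu n; exact: b.
  by rewrite lexx ler01.
by have [Q _ clQ] := compact_cluster_seq _ _ cube (fun n => u01 n); exists Q.
Qed.

Context {Q : setfun}.
Hypothesis clQ : cluster (setwise (u n) @[n --> \oo]) Q.

Let ev A : continuous (fun f : setfun => f A).
Proof. exact: proj_continuous. Qed.

Let evD A B : continuous (fun f : setfun => f A + f B).
Proof. by move=> f; exact: (continuousD (ev A f) (ev B f)). Qed.

Let evDr A e : continuous (fun f : setfun => f A + e).
Proof. by move=> f; exact: (continuousD (ev A f) (@cst_continuous _ _ e f)). Qed.

Let Qle (g h : setfun -> R) : continuous g -> continuous h ->
  (\forall n \near \oo, g (setwise (u n)) <= h (setwise (u n))) -> g Q <= h Q.
Proof. by move=> cg ch gh; exact: cluster_seq_le cg ch gh clQ. Qed.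

Let Qeq (g h : setfun -> R) : continuous g -> continuous h ->
  (forall n, g (setwise (u n)) = h (setwise (u n))) -> g Q = h Q.
Proof.
move=> cg ch gh; apply/le_anti/andP.
by split; apply: Qle => //; apply: nearW => n; rewrite gh.
Qed.

Lemma setwise_cluster_le A c : measurable A ->
  (\forall n \near \oo, u n A <= c) -> Q A <= c.
Proof.
move=> mA uc; apply: (Qle (fun f => f A) (cst c) (ev A) (@cst_continuous _ _ c)).
by apply: filterS uc => n /=; rewrite setwiseE.
Qed.

Lemma setwise_cluster_ge A c : measurable A ->
  (\forall n \near \oo, c <= u n A) -> c <= Q A.
Proof.
move=> mA uc; apply: (Qle (cst c) (fun f => f A) (@cst_continuous _ _ c) (ev A)).
by apply: filterS uc => n /=; rewrite setwiseE.
Qed.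

Lemma fa_prob_setwise_cluster : fa_prob Q.
Proof.
split.
- apply: (Qeq (fun f => f setT) (cst 1) (ev setT) (@cst_continuous _ _ (1 : R))) => n /=.
  by rewrite setwiseE //; case: (fu n).
- move=> A mA; apply/andP; split.
    apply: (setwise_cluster_ge _ _ mA); apply: nearW => n.
    by have := fa_prob_ge0 (fu n) mA.
  apply: (setwise_cluster_le _ _ mA); apply: nearW => n.
  by have := fa_prob_le1 (fu n) mA.
- move=> A B mA mB AB0.
  apply: (Qeq (fun f => f (A `|` B)) (fun f => f A + f B) (ev _) (evD A B)) => n /=.
  by have [_ _ add] := fu n; rewrite !setwiseE ?add //; exact: measurableU.
Qed.

Lemma setwise_cluster_eq A B : measurable A -> measurable B ->
  (forall n, `|u n A - u n B| <= n.+1%:R^-1) -> Q A = Q B.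
Proof.
have le A' B' : measurable A' -> measurable B' ->
    (forall n, u n A' <= u n B' + n.+1%:R^-1) -> Q A' <= Q B'.
  move=> mA' mB' uAB; apply/ler_addgt0Pr => e e0.
  apply: (Qle (fun f => f A') (fun f => f B' + e) (ev A') (evDr B' e)).
  apply: filterS (near_infty_natSinv_lt (PosNum e0)) => n /= ne.
  by rewrite !setwiseE //; apply: le_trans (uAB n) _; rewrite lerD2l ltW.
move=> mA mB uAB; apply/le_anti/andP; split; apply: le => // n.
  exact: ler_distlDr.
exact: ler_distlCDr.
Qed.

End SetwiseCluster.

Section UpperProbability.
Context {d : measure_display} {Omega : measurableType d} {R : realType}.
Context {V : set Omega -> R} (uV : upper_probability V).

Lemma upper_probability_cvg0 (G : nat -> set Omega) :
  (forall n, measurable (G n)) -> {homo G : n m / (n <= m)%N >-> m `<=` n} ->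
  \bigcap_n G n = set0 -> V (G n) @[n --> \oo] --> 0.
Proof.
move=> mG niG G0; have [[_ _ Vb Vmono] [L [Lprob Lcomp LV]]] := uV.
(* Otherwise maximizers P_N of V (G N) in L have a weak* cluster point P in L
   with e <= P (G N) for all N, against the sigma-additivity of P. *)
have small e : 0 < e -> exists N, V (G N) < e.
  move=> e0; apply: contrapT => /forallNP Ve.
  have {}Ve N : e <= V (G N) by rewrite leNgt; apply/negP/Ve.
  have /choice[Pn hPn] N : exists P, L P /\ P (G N) = V (G N).
    by have [[P LP PV] _] := LV _ (mG N); exists P.
  have [_ [P LP <-] clP] := compact_cluster_seq _ (fun n => setwise (Pn n)) Lcomp
    (fun n => ex_intro2 _ _ (Pn n) (hPn n).1 erefl).
  have PGe N : e <= P (G N).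
    rewrite -setwiseE //; apply: (setwise_cluster_ge clP _ _ (mG N)).
    exists N => // n /= Nn; rewrite (le_trans (Ve n)) // -(hPn n).2.
    by have := le_fa_prob (Lprob _ (hPn n).1).1 (mG n) (mG N) (niG _ _ Nn).
  have := nonincreasing_cvg_probability (Lprob _ LP) G mG niG.
  rewrite G0 (fa_prob0 (Lprob _ LP).1) => /cvgr_to_ge/(_ (nearW _ PGe)).
  by rewrite leNgt e0.
apply/cvgrPdist_lt => e e0; have [N VN] := small e e0.
exists N => // n /= Nn; rewrite sub0r normrN ger0_norm; last by case/andP: (Vb _ (mG n)).
exact: le_lt_trans (Vmono _ _ (mG n) (mG N) (niG _ _ Nn)) VN.
Qed.

Lemma upper_probability_attained {A} : measurable A ->
  exists2 P, core V P & P A = V A.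
Proof.
have [_ [L [Lprob _ LV]]] := uV; move=> mA; have [[P LP PA] _] := LV A mA.
by exists P => //; split => [|B mB]; [exact: (Lprob _ LP).1 | exact: (LV B mB).2].
Qed.

Lemma core_is_probability {P} : core V P -> is_probability P.
Proof.
move=> [fP PV]; split => // F mF tF.
pose S n := \big[setU/set0]_(i < n) F i.
pose G n := \bigcup_k F k `\` S n.
have mU : measurable (\bigcup_k F k) by exact: bigcup_measurable.
have mS n : measurable (S n) by exact: bigsetU_measurable.
have SE n x : S n x <-> exists2 i, (i < n)%N & F i x.
  by rewrite /S -bigcup_mkord; split => -[i ? ?]; exists i.
have SU n : S n `<=` \bigcup_k F k by move=> x /SE[i _ Fix]; exists i.
have niG : {homo G : n m / (n <= m)%N >-> m `<=` n}.
  move=> n m nm x [Ux nSx]; split => // /SE[i ilt Fix]; apply: nSx.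
  by apply/SE; exists i => //; exact: leq_trans ilt nm.
have G0 : \bigcap_n G n = set0.
  apply/seteqP; split => // x Gx; have [[i _ Fix] _] := Gx 0%N I.
  by have [_] := Gx i.+1 I; apply; apply/SE; exists i.
have /cvgrPdist_lt VG0 :=
  upper_probability_cvg0 G (fun n => measurableD mU (mS n)) niG G0.
apply/cvgrPdist_lt => e /VG0; apply: filterS => n /=.
rewrite sub0r normrN -(fa_prob_bigsetU fP F n mF tF) -/(S n).
rewrite (fa_probD fP (mS n) mU (SU n)) [P (S n) + _]addrC addrK => VGe.
have mG := measurableD mU (mS n).
rewrite ger0_norm ?(fa_prob_ge0 fP mG) //.
exact: le_lt_trans (PV _ mG) (le_lt_trans (ler_norm _) VGe).
Qed.

End UpperProbability.

Lemma mean_le {R : numFieldType} (a : nat -> R) c n : (forall k, a k <= c) ->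
  (\sum_(0 <= k < n.+1) a k) / n.+1%:R <= c.
Proof.
move=> ac; rewrite ler_pdivrMr ?ltr0Sn // mulr_natr -[X in c *+ X]subn0.
by rewrite -sumr_const_nat; apply: ler_sum => k _; exact: ac.
Qed.

Section Cesaro.
Context {d : measure_display} {Omega : measurableType d} {R : realType}.
Context {T : Omega -> Omega} (mT : measurable_fun setT T).
Implicit Types (A : set Omega) (mu P : set Omega -> R).

Lemma measurable_iter_preimage k {A} : measurable A -> measurable (iter k T @^-1` A).
Proof.
elim: k A => [//|k IH] A mA; apply: (IH (T @^-1` A)).
by rewrite -[T @^-1` A]setTI; exact: mT.
Qed.

Lemma T_invariant_iter mu k A : T_invariant T mu -> measurable A ->
  mu (iter k T @^-1` A) = mu A.
Proof.
move=> Tmu; elim: k A => [//|k IH] A mA.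
by rewrite [LHS](IH (T @^-1` A)) ?Tmu // -[T @^-1` A]setTI; exact: mT.
Qed.

Definition cesaro P n A := (\sum_(0 <= k < n.+1) P (iter k T @^-1` A)) / n.+1%:R.

Lemma fa_prob_cesaro P n : fa_prob P -> fa_prob (cesaro P n).
Proof.
move=> fP; have [PT _ Padd] := fP; split.
- rewrite /cesaro; under eq_bigr do rewrite preimage_setT PT.
  by rewrite sumr_const_nat subn0 divff // pnatr_eq0.
- move=> A mA; apply/andP; split; last first.
    apply: (mean_le (fun k => P (iter k T @^-1` A))) => k.
    exact/(fa_prob_le1 fP)/measurable_iter_preimage.
  apply: divr_ge0 => //; apply: sumr_ge0 => k _.
  exact/(fa_prob_ge0 fP)/measurable_iter_preimage.
- move=> A B mA mB AB0; rewrite /cesaro -mulrDl -big_split /=; congr (_ / _).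
  apply: eq_bigr => k _; rewrite preimage_setU Padd //.
  - exact: measurable_iter_preimage.
  - exact: measurable_iter_preimage.
  - by rewrite -preimage_setI AB0 preimage_set0.
Qed.

Lemma cesaro_le mu P n A : T_invariant T mu -> measurable A ->
  (forall A, measurable A -> P A <= mu A) -> cesaro P n A <= mu A.
Proof.
move=> Tmu mA Pmu; apply: (mean_le (fun k => P (iter k T @^-1` A))) => k.
by rewrite -(T_invariant_iter _ k _ Tmu mA); exact/Pmu/measurable_iter_preimage.
Qed.

Lemma dist_cesaro_preimage P n A : fa_prob P -> measurable A ->
  `|cesaro P n (T @^-1` A) - cesaro P n A| <= n.+1%:R^-1.
Proof.
move=> fP mA; rewrite /cesaro -mulrBl normrM [`|_^-1|]ger0_norm // ler_piMl //.
rewrite -sumrB (@telescope_sumr _ 0 n.+1 (fun k => P (iter k T @^-1` A))) //.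
have := fa_prob_ge0 fP (measurable_iter_preimage n.+1 mA).
have := fa_prob_le1 fP (measurable_iter_preimage n.+1 mA).
have := fa_prob_ge0 fP (measurable_iter_preimage 0 mA).
have := fa_prob_le1 fP (measurable_iter_preimage 0 mA).
rewrite ler_norml; lra.
Qed.

End Cesaro.
Arguments cesaro {d Omega R} T P n A.

Lemma exists_T_invariant_core {d : measure_display}
    {Omega : measurableType d} {R : realType} {T : Omega -> Omega}
    {V : set Omega -> R} :
  measurable_fun setT T -> upper_probability V -> T_invariant T V ->
  exists Q, core V Q /\ T_invariant T Q.
Proof.
move=> mT uV TV; have [P0 [fP0 P0V] _] := upper_probability_attained uV measurableT.
have fu n := fa_prob_cesaro mT P0 n fP0.
have [Q clQ] := exists_setwise_cluster fu.
exists Q; split; first split.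
- exact: fa_prob_setwise_cluster clQ.
- move=> A mA; apply: (setwise_cluster_le clQ _ _ mA); apply: nearW => n.
  exact: cesaro_le.
- move=> A mA; apply: (setwise_cluster_eq clQ _ _ (measurable_iter_preimage mT 1 mA) mA).
  by move=> n; exact: dist_cesaro_preimage.
Qed.

(* nu abstracts the difference Q1 - Q2 of two probabilities. *)
Section MaximalSet.
Context {d : measure_display} {Omega : measurableType d} {R : realType}.
Variable nu : set Omega -> R.
Hypothesis nuUI : forall A B, measurable A -> measurable B ->
  nu (A `|` B) + nu (A `&` B) = nu A + nu B.
Hypothesis nu_nondecreasing : forall F : nat -> set Omega,
  (forall n, measurable (F n)) -> {homo F : n m / (n <= m)%N >-> n `<=` m} ->
  nu (F n) @[n --> \oo] --> nu (\bigcup_n F n).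
Hypothesis nu_nonincreasing : forall F : nat -> set Omega,
  (forall n, measurable (F n)) -> {homo F : n m / (n <= m)%N >-> m `<=` n} ->
  nu (F n) @[n --> \oo] --> nu (\bigcap_n F n).
Hypothesis nu_ub : has_ubound [set nu A | A in measurable].

Let s := sup [set nu A | A in measurable].

Let has_sup_nu : has_sup [set nu A | A in measurable].
Proof. by split => //; exists (nu set0), set0. Qed.

Lemma nu_le_sup {A} : measurable A -> nu A <= s.
Proof. by move=> mA; apply: sup_upper_bound has_sup_nu _ _; exists A. Qed.

Lemma maximal_setU A B : measurable A -> measurable B -> nu A = s -> nu B = s ->
  nu (A `|` B) = s.
Proof.
move=> mA mB nuA nuB; have := nuUI _ _ mA mB.
have := nu_le_sup (measurableU _ _ mA mB); have := nu_le_sup (measurableI _ _ mA mB).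
lra.
Qed.

Section Liminf.
Variable A : nat -> set Omega.
Hypothesis mA : forall k, measurable (A k).
Hypothesis nuA : forall k, s - 1 / 2 ^+ k < nu (A k).

Let tail m := \bigcap_(k in [set k | (m <= k)%N]) A k.

Lemma measurable_tail m : measurable (tail m).
Proof. by apply: bigcap_measurable => [|k _]; [exists m => /= | exact: mA]. Qed.

Lemma nu_tail_ge m : s - 2 / 2 ^+ m <= nu (tail m).
Proof.
pose C n := \bigcap_(k in [set k | (m <= k <= m + n)%N]) A k.
have mC n : measurable (C n).
  by apply: bigcap_measurable => [|k _]; [exists m => /=; lia | exact: mA].
have CS n : C n.+1 = C n `&` A (m + n.+1)%N.
  apply/seteqP; split => x /= Cx.
    by split => [k /= kmn|]; apply: Cx => /=; lia.
  move=> k /= kmn; have [kn|->] : (k <= m + n)%N \/ k = (m + n.+1)%N by lia.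
    by apply: Cx.1 => /=; lia.
  exact: Cx.2.
have nuC n : s - 2 / 2 ^+ m + 1 / 2 ^+ (m + n) <= nu (C n).
  elim: n => [|n IH].
    have -> : C 0%N = A m.
      apply/seteqP; split => [x /(_ m) + |x Ax k /=]; first by apply => /=; lia.
      by rewrite addn0 -eqn_leq => /eqP <-.
    by rewrite addn0; have := nuA m; lra.
  rewrite CS; have := nuUI _ _ (mC n) (mA (m + n.+1)%N).
  have := nu_le_sup (measurableU _ _ (mC n) (mA (m + n.+1)%N)).
  have := nuA (m + n.+1)%N; rewrite addnS exprS.
  set a := 2 ^+ (m + n); have a0 : 0 < a by rewrite exprn_gt0.
  have -> : 1 / (2 * a) = 1 / a / 2 by rewrite !mul1r invfM mulrC.
  lra.
have -> : tail m = \bigcap_n C n.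
  apply/seteqP; split => [x Tx n _ k /andP[mk _]|x Cx k /= mk]; first exact: Tx.
  by apply: (Cx (k - m)%N I) => /=; lia.
apply: cvgr_to_ge (nu_nonincreasing _ mC _) _.
  by move=> n n' nn' x Cx k /= /andP[mk kn]; apply: Cx => /=; lia.
apply: nearW => n; have : 0 < 1 / 2 ^+ (m + n) :> R by rewrite divr_gt0 // exprn_gt0.
have := nuC n; lra.
Qed.

Lemma nu_liminf : nu (\bigcup_m tail m) = s.
Proof.
apply/le_anti/andP; split.
  by apply/nu_le_sup/bigcup_measurable => m _; exact: measurable_tail.
apply/ler_addgt0Pr => e e0; rewrite -lerBlDr.
apply: cvgr_to_ge (nu_nondecreasing _ measurable_tail _) _.
  by move=> n n' nn' x Tx k /= n'k; apply: Tx => /=; lia.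
apply: filterS (near_infty_natSinv_expn_lt (PosNum (divr_gt0 e0 (@ltr0Sn R 1)))).
move=> m /= me; have := nu_tail_ge m.
have -> : 2 / 2 ^+ m = 2 * (1 / 2 ^+ m) :> R by rewrite mul1r.
lra.
Qed.
End Liminf.

Lemma exists_maximal_set : exists2 P, measurable P & nu P = s.
Proof.
have /choice[A hA] k : exists A, measurable A /\ s - 1 / 2 ^+ k < nu A.
  have k0 : 0 < 1 / 2 ^+ k :> R by rewrite divr_gt0 // exprn_gt0.
  by have [_ [A mA <-] ?] := sup_adherent k0 has_sup_nu; exists A.
exists (\bigcup_m \bigcap_(k in [set k | (m <= k)%N]) A k).
  by apply: bigcup_measurable => m _; exact: measurable_tail (fun k => (hA k).1) m.
exact: nu_liminf (fun k => (hA k).1) (fun k => (hA k).2).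
Qed.

(* Unions of maximal sets are maximal, so each set of points visiting P at
   some time >= m is maximal, and so is their intersection, which is
   T-invariant. *)
Section Recurrence.
Context {T : Omega -> Omega} (mT : measurable_fun setT T) (nuT : T_invariant T nu).
Variable P : set Omega.
Hypotheses (mP : measurable P) (nuP : nu P = s).

Let visits m := [set x | exists2 j, (m <= j)%N & P (iter j T x)].

Let visits_until m k := [set x | exists2 j, (m <= j <= m + k)%N & P (iter j T x)].

Let visits_until0 m : visits_until m 0 = iter m T @^-1` P.
Proof.
apply/seteqP; split => [x [j /andP[mj jm] Px]|x Px]; last by exists m => //=; lia.
by have -> : m = j by lia.
Qed.

Let visits_untilS m k :
  visits_until m k.+1 = visits_until m k `|` iter (m + k.+1) T @^-1` P.
Proof.
apply/seteqP; split => [x [j jmk Px]|x [[j jmk Px]|Px]].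
- have [jk|jE] : (j <= m + k)%N \/ j = (m + k.+1)%N by lia.
    by left; exists j => //; lia.
  by right; rewrite /= -jE.
- by exists j => //; lia.
- by exists (m + k.+1)%N => //; lia.
Qed.

Let measurable_visits_until m k : measurable (visits_until m k).
Proof.
elim: k => [|k IH]; rewrite ?visits_until0 ?visits_untilS.
  exact: measurable_iter_preimage.
exact/measurableU/measurable_iter_preimage.
Qed.

Let nu_visits_until m k : nu (visits_until m k) = s.
Proof.
elim: k => [|k IH]; rewrite ?visits_until0 ?visits_untilS.
  by rewrite T_invariant_iter.
apply: maximal_setU => //; last by rewrite T_invariant_iter.
exact: measurable_iter_preimage.
Qed.

Let visitsE m : visits m = \bigcup_k visits_until m k.
Proof.
apply/seteqP; split => [x [j mj Px]|x [k _ [j /andP[mj _] Px]]]; last by exists j.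
by exists (j - m)%N => //; exists j => //=; lia.
Qed.

Let measurable_visits m : measurable (visits m).
Proof.
by rewrite visitsE; apply: bigcup_measurable => k _.
Qed.

Lemma invariant_set_limsup_visits : invariant_set T (\bigcap_m visits m).
Proof.
split; first by apply: bigcap_measurable => //; exists 0%N.
apply/seteqP; split => x Vx m _.
  have [j mj Px] := Vx m I.
  by exists j.+1; [lia | rewrite iterSr].
have [[|j] mj Px] := Vx m.+1 I; first by [].
by exists j; [lia | rewrite -iterSr].
Qed.

Lemma nu_limsup_visits : nu (\bigcap_m visits m) = s.
Proof.
apply/le_anti/andP; split; first by apply/nu_le_sup/bigcap_measurable => //; exists 0%N.
apply: cvgr_to_ge (nu_nonincreasing _ measurable_visits _) _.
  by move=> m m' mm' x [j m'j Px]; exists j => //; exact: leq_trans m'j.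
apply: nearW => m; rewrite visitsE.
apply: cvgr_to_ge (nu_nondecreasing _ (measurable_visits_until m) _) _.
  by move=> k k' kk' x [j /andP[mj jk] Px]; exists j => //; lia.
by apply: nearW => k; rewrite nu_visits_until.
Qed.

End Recurrence.

Lemma exists_invariant_maximal_set {T : Omega -> Omega} :
  measurable_fun setT T -> T_invariant T nu ->
  exists2 B, invariant_set T B & nu B = s.
Proof.
move=> mT nuT; have [P mP nuP] := exists_maximal_set.
exists (\bigcap_m [set x | exists2 j, (m <= j)%N & P (iter j T x)]).
  exact: (invariant_set_limsup_visits mT P mP).
exact: (nu_limsup_visits mT nuT P mP nuP).
Qed.

End MaximalSet.

Lemma invariant_probability_le {d : measure_display} {Omega : measurableType d}
    {R : realType} {T : Omega -> Omega} (Q1 Q2 : set Omega -> R) :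
  measurable_fun setT T -> is_probability Q1 -> is_probability Q2 ->
  T_invariant T Q1 -> T_invariant T Q2 ->
  (forall B, invariant_set T B -> Q1 B = Q2 B) ->
  forall A, measurable A -> Q1 A <= Q2 A.
Proof.
move=> mT p1 p2 T1 T2 Q12 A mA; pose nu A := Q1 A - Q2 A.
have nuUI A' B : measurable A' -> measurable B ->
    nu (A' `|` B) + nu (A' `&` B) = nu A' + nu B.
  move=> mA' mB; rewrite /nu.
  by have := fa_probUI p1.1 mA' mB; have := fa_probUI p2.1 mA' mB; lra.
have nu_up F : (forall n, measurable (F n)) ->
    {homo F : n m / (n <= m)%N >-> n `<=` m} ->
    nu (F n) @[n --> \oo] --> nu (\bigcup_n F n).
  move=> mF ndF; apply: cvgB; exact: nondecreasing_cvg_probability.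
have nu_down F : (forall n, measurable (F n)) ->
    {homo F : n m / (n <= m)%N >-> m `<=` n} ->
    nu (F n) @[n --> \oo] --> nu (\bigcap_n F n).
  move=> mF niF; apply: cvgB; exact: nonincreasing_cvg_probability.
have nu_ub : has_ubound [set nu A | A in measurable].
  exists 1 => _ [A' mA' <-]; rewrite /nu.
  by have := fa_prob_le1 p1.1 mA'; have := fa_prob_ge0 p2.1 mA'; lra.
have nuT : T_invariant T nu by move=> A' mA'; rewrite /nu T1 ?T2.
have [B iB] := exists_invariant_maximal_set nu nuUI nu_up nu_down nu_ub mT nuT.
rewrite /nu Q12 // subrr => s0; rewrite -subr_le0.
by have := nu_le_sup nu nu_ub mA; rewrite -s0.
Qed.

Lemma invariant_probability_eq {d : measure_display} {Omega : measurableType d}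
    {R : realType} {T : Omega -> Omega} (Q1 Q2 : set Omega -> R) :
  measurable_fun setT T -> is_probability Q1 -> is_probability Q2 ->
  T_invariant T Q1 -> T_invariant T Q2 ->
  (forall B, invariant_set T B -> Q1 B = Q2 B) ->
  forall A, measurable A -> Q1 A = Q2 A.
Proof.
move=> mT p1 p2 T1 T2 Q12 A mA; apply/le_anti/andP; split.
  exact: (invariant_probability_le _ _ mT p1 p2 T1 T2).
by apply: (invariant_probability_le _ _ mT p2 p1 T2 T1) => // B /Q12 ->.
Qed.

Section Ergodicity.
Context {d : measure_display} {Omega : measurableType d} {R : realType}.
Context {T : Omega -> Omega}.
Implicit Types (V P : set Omega -> R) (B : set Omega).

Lemma invariant_setC {B} : invariant_set T B -> invariant_set T (~` B).
Proof. by move=> [mB TB]; split; [exact: measurableC | rewrite -[in RHS]TB]. Qed.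

Lemma ergodic_core_eq_on_invariant {V P B} : ergodic_capacity T V -> core V P ->
  invariant_set T B -> P B = V B.
Proof.
move=> [_ ergV] [fP PV] iB; have [mB _] := iB.
have := PV _ mB; have := fa_prob_ge0 fP mB.
have := PV _ (measurableC mB); have := fa_prob_ge0 fP (measurableC mB).
rewrite (fa_probC fP mB); have [[V0|V1] [V0'|VC0]] := ergV B iB; lra.
Qed.

End Ergodicity.

Theorem theorem3p2 (d : measure_display) (Omega : measurableType d)
  (R : realType) (T : Omega -> Omega) (V : set Omega -> R) :
  measurable_fun setT T ->
  upper_probability V -> T_invariant T V ->
  (ergodic_capacity T V <->
     exists Q, [/\ ergodic_prob T Q, core V Q &
       forall P, core V P -> forall A, invariant_set T A -> P A = Q A])
  /\
  (forall Q1 Q2 : set Omega -> R,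
     [/\ ergodic_prob T Q1, core V Q1 &
       forall P, core V P -> forall A, invariant_set T A -> P A = Q1 A] ->
     [/\ ergodic_prob T Q2, core V Q2 &
       forall P, core V P -> forall A, invariant_set T A -> P A = Q2 A] ->
     forall A, measurable A -> Q1 A = Q2 A).
Proof.
move=> mT uV TV; split; first split.
- move=> ergV; have [Q [cQ TQ]] := exists_T_invariant_core mT uV TV.
  have QV B : invariant_set T B -> Q B = V B by exact: ergodic_core_eq_on_invariant.
  exists Q; split => [|//|P cP A iA].
    split => //; first exact: (core_is_probability uV cQ).
    by move=> B iB; rewrite QV //; case: ergV => _ /(_ B iB) [].
  by rewrite QV // (ergodic_core_eq_on_invariant ergV cP iA).
- move=> [Q [[pQ _ ergQ] cQ agree]]; split => // B iB.
  have VQ B' : invariant_set T B' -> V B' = Q B'.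
    by move=> iB'; have [P cP <-] := upper_probability_attained uV iB'.1; exact: agree.
  rewrite (VQ _ (invariant_setC iB)) VQ // (fa_probC pQ.1 iB.1).
  by case: (ergQ B iB) => ->; rewrite ?subrr ?subr0; [split; left | split; right].
- move=> Q1 Q2 [[p1 T1 _] c1 a1] [[p2 T2 _] c2 a2] A mA.
  by apply: (invariant_probability_eq _ _ mT) => // B iB; exact: a2 _ c1 B iB.
Qed.
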